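(* For all $p\in[0,1]$ and all $n\geq 1$ one has $$P^{\rm Ab}_n(p)\leq P^{\rm AB}_n(p)\qquad\text{and}\qquad P^{\rm aB}_n(p)\geq P^{\rm AB}_n(p).$$
   Context: Fix $n\geq1$. Two players, Alice and Bob, alternately make moves, Alice first, each making $n$ moves; every move is a choice from $\{1,2\}$. Write Alice's moves as $a=(a_1,\dots,a_n)$ and Bob's as $b=(b_1,\dots,b_n)$, and let $|a|_1:=\#\{k:a_k=1\}$, $|b|_1:=\#\{k:b_k=1\}$. Four games are defined by what the outcome of the game is: - in ${\rm AB}_n(p)$ the outcome is $(a,b)$; - in ${\rm Ab}_n(p)$ it is $(a,|b|_1)$; - in ${\rm aB}_n(p)$ it is $(|a|_1,b)$; - in ${\rm ab}_n(p)$ it is $(|a|_1,|b|_1)$. To each possible outcome a winner is assigned independently at random: Bob with probability $p$, Alice with probability $1-p$. The players know this assignment and all previous moves. A winning strategy for Bob is a rule choosing each of his moves as a function of the previous moves that guarantees the outcome is a win for Bob whatever Alice plays. $P^{\rm xx}_n(p)$ (for ${\rm xx}\in\{{\rm AB},{\rm Ab},{\rm aB},{\rm ab}\}$) is the probability that Bob has a winning strategy in ${\rm xx}_n(p)$. *)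

From mathcomp Require Import all_boot all_order all_algebra.
From mathcomp Require Import boolp.
Set Implicit Arguments. Unset Strict Implicit. Unset Printing Implicit Defensive.
Import Order.TTheory GRing.Theory Num.Theory.
Local Open Scope ring_scope.

(* A move is an element of {1,2}, encoded as a bool: true = 1, false = 2. *)
Definition move := bool.

Definition ones n (x : n.-tuple move) : 'I_n.+1 := inord (count id x).

(* A strategy for Bob: his next move as a function of the whole history of
   previous moves (listed in chronological order a1, b1, a2, b2, ...). *)
Definition strategy := seq move -> move.

Fixpoint bob_replies (s : strategy) (h : seq move) (a : seq move) : seq move :=
  match a with
  | [::] => [::]
  | x :: a' => let h1 := rcons h x in
               let y := s h1 in
               y :: bob_replies s (rcons h1 y) a'
  end.

Definition bob_moves n (s : strategy) (a : n.-tuple move) : n.-tuple move :=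
  [tuple nth false (bob_replies s [::] a) i | i < n].

(* A game with outcome set O and outcome map out (a, b) |-> outcome;
   w o = true means outcome o is a win for Bob.  Bob has a winning strategy. *)
Definition bob_has_winning_strategy n (O : finType)
    (out : n.-tuple move -> n.-tuple move -> O) (w : {ffun O -> bool}) : Prop :=
  exists s : strategy, forall a : n.-tuple move, w (out a (bob_moves s a)).

(* Probability of the random assignment w (independent, Bob w.p. p). *)
Definition weight (R : numDomainType) (p : R) (O : finType) (w : {ffun O -> bool}) : R :=
  \prod_(o : O) (if w o then p else 1 - p).

Definition prob_bob_wins (R : numDomainType) (p : R) n (O : finType)
    (out : n.-tuple move -> n.-tuple move -> O) : R :=
  \sum_(w : {ffun O -> bool} | `[< bob_has_winning_strategy out w >]) weight p w.

Definition out_AB n (a b : n.-tuple move) : (n.-tuple move * n.-tuple move)%type := (a, b).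
Definition out_Ab n (a b : n.-tuple move) : (n.-tuple move * 'I_n.+1)%type := (a, ones b).
Definition out_aB n (a b : n.-tuple move) : ('I_n.+1 * n.-tuple move)%type := (ones a, b).
Definition out_ab n (a b : n.-tuple move) : ('I_n.+1 * 'I_n.+1)%type := (ones a, ones b).

Definition P_AB (R : numDomainType) (p : R) n := prob_bob_wins p (@out_AB n).
Definition P_Ab (R : numDomainType) (p : R) n := prob_bob_wins p (@out_Ab n).
Definition P_aB (R : numDomainType) (p : R) n := prob_bob_wins p (@out_aB n).
Definition P_ab (R : numDomainType) (p : R) n := prob_bob_wins p (@out_ab n).

From mathcomp Require Import all_boot all_order all_algebra.
From mathcomp Require Import boolp ring lra.
Set Implicit Arguments. Unset Strict Implicit. Unset Printing Implicit Defensive.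
Import Order.TTheory GRing.Theory Num.Theory.
Local Open Scope ring_scope.

(* Bob wins a game with m + 1 rounds iff for each first move x of Alice he has a reply y
   after which he wins the remaining m rounds (the subgame (x, y)).  As a function of the random
   assignment of winners this is an increasing event A_1 /\ A_2 with A_x = B_x1 \/ B_x2.
   When the outcome determines Alice's moves (AB, Ab), A_1 and A_2 depend on disjoint sets of
   outcomes, hence are independent, while B_x1 and B_x2 are positively correlated by Harris'
   inequality; by induction Bob wins with probability at most g_m ([value_AB m]), where g_0 = p and
   g_(m+1) = (1 - (1 - g_m)^2)^2.  When the outcome determines Bob's moves (AB, aB), the B_xy are
   independent and A_1, A_2 positively correlated, so the probability is at least g_m.  The game
   AB is in both cases, so P^AB_n = g_n lies between P^Ab_n and P^aB_n. *)

Definition prob_or (R : pzRingType) (x y : R) : R := 1 - (1 - x) * (1 - y).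

Lemma ler_prob_or (R : numDomainType) (x y x' y' : R) :
  x <= x' <= 1 -> y <= y' <= 1 -> prob_or x y <= prob_or x' y'.
Proof.
move=> /andP [xx' x'1] /andP [yy' y'1].
by rewrite /prob_or lerD2l lerN2 ler_pM ?subr_ge0 ?lerD2l ?lerN2.
Qed.

Lemma prob_or_in01 (R : realDomainType) (x y : R) :
  0 <= x <= 1 -> 0 <= y <= 1 -> 0 <= prob_or x y <= 1.
Proof. rewrite /prob_or; nra. Qed.

Section ProductMeasure.
Variables (R : realFieldType) (p : R) (O : finType).
Hypothesis p01 : 0 <= p <= 1.
Local Notation assignment := {ffun O -> bool}.
Implicit Types (w : assignment) (F G : assignment -> bool) (P Q : O -> Prop).

Definition pr F : R := \sum_(w : assignment) weight p w * (F w)%:R.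

Lemma weight_ge0 w : 0 <= weight p w.
Proof.
have [p_ge0 p_le1] := andP p01.
by apply: prodr_ge0 => o _; case: (w o); rewrite ?subr_ge0.
Qed.

Lemma sum_weight : \sum_(w : assignment) weight p w = 1.
Proof.
rewrite /weight -(bigA_distr_bigA (fun _ (b : bool) => if b then p else 1 - p)).
by apply: big1 => o _; rewrite big_bool /= addrC subrK.
Qed.

Lemma eq_pr F G : F =1 G -> pr F = pr G.
Proof. by move=> eqFG; apply: eq_bigr => w _; rewrite eqFG. Qed.

Lemma pr_cst (c : bool) : pr (fun=> c) = c%:R.
Proof. by rewrite /pr -big_distrl /= sum_weight mul1r. Qed.

Lemma le_pr F G : (forall w, F w -> G w) -> pr F <= pr G.
Proof.
move=> FG; apply: ler_sum => w _; apply: ler_wpM2l; first exact: weight_ge0.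
by rewrite ler_nat; case: (F w) (FG w) => [-> | _] //; apply: leq0n.
Qed.

Lemma pr_ge0 F : 0 <= pr F.
Proof. by rewrite -[0](pr_cst false); apply: le_pr. Qed.

Lemma pr_le1 F : pr F <= 1.
Proof. by rewrite -[1](pr_cst true); apply: le_pr. Qed.

Lemma pr_or F G :
  pr (fun w => F w || G w) = pr F + pr G - pr (fun w => F w && G w).
Proof.
apply/eqP; rewrite eq_sym subr_eq /pr -!big_split /=; apply/eqP.
by apply: eq_bigr => w _; case: (F w); case: (G w); rewrite ?mulr0 ?addr0 ?add0r.
Qed.

Definition upd w o x : assignment := [ffun o' => if o' == o then x else w o'].

Lemma upd_id w o : upd w o (w o) = w.
Proof. by apply/ffunP => o'; rewrite ffunE; case: eqP => // ->. Qed.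

Lemma upd_upd w o x y : upd (upd w o x) o y = upd w o y.
Proof. by apply/ffunP => o'; rewrite !ffunE; case: eqP. Qed.

Lemma upd_at w o x : upd w o x o = x.
Proof. by rewrite ffunE eqxx. Qed.

Lemma weight_upd w o x :
  weight p (upd w o x) =
  (if x then p else 1 - p) * \prod_(o' | o' != o) (if w o' then p else 1 - p).
Proof.
rewrite /weight (bigD1 o) //= upd_at; congr (_ * _).
by apply: eq_bigr => o' /negbTE o'o; rewrite ffunE o'o.
Qed.

Lemma sum_upd o (K : assignment -> R) :
  \sum_(w : assignment) K w =
  \sum_(w : assignment | w o) (K (upd w o true) + K (upd w o false)).
Proof.
rewrite (bigID (fun w : assignment => w o)) big_split /=; congr (_ + _).
  by apply: eq_bigr => w wo; rewrite -wo upd_id.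
have flipK : involutive (fun w : assignment => upd w o (~~ w o)).
  by move=> w; rewrite /= upd_upd upd_at negbK upd_id.
rewrite (reindex_inj (inv_inj flipK)) /=.
by apply: eq_big => w; rewrite upd_at ?negbK // => ->.
Qed.

Lemma pr_cond o F :
  pr F = p * pr (fun w => F (upd w o true)) + (1 - p) * pr (fun w => F (upd w o false)).
Proof.
rewrite /pr !(sum_upd o) !big_distrr -big_split /=; apply: eq_bigr => w _.
rewrite !upd_upd !weight_upd; ring.
Qed.

Lemma pr_coord o : pr (fun w => w o) = p.
Proof.
have pr_at x : pr (fun w => upd w o x o) = x%:R.
  by rewrite -pr_cst; apply: eq_pr => w; rewrite upd_at.
by rewrite (pr_cond o) !pr_at mulr1 mulr0 addr0.
Qed.

Definition increasing F := forall w w', (forall o, w o -> w' o) -> F w -> F w'.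

Definition depends_on P F := forall w w', (forall o, P o -> w o = w' o) -> F w = F w'.

Lemma increasing_upd F o x : increasing F -> increasing (fun w => F (upd w o x)).
Proof.
by move=> incF w w' ww'; apply: incF => o'; rewrite !ffunE; case: eqP => // _; apply: ww'.
Qed.

Lemma le_pr_upd F o : increasing F ->
  pr (fun w => F (upd w o false)) <= pr (fun w => F (upd w o true)).
Proof. by move=> incF; apply: le_pr => w; apply: incF => o'; rewrite !ffunE; case: eqP. Qed.

Lemma sub_depends_on P Q F : (forall o, P o -> Q o) -> depends_on P F -> depends_on Q F.
Proof. by move=> PQ depF w w' ww'; apply: depF => o /PQ /ww'. Qed.

Lemma depends_on_upd (S : seq O) o x F :
  depends_on (fun o' => o' \in o :: S) F ->
  depends_on (fun o' => o' \in S) (fun w => F (upd w o x)).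
Proof.
move=> depF w w' ww'; apply: depF => o'; rewrite in_cons !ffunE.
by case: eqP => //= _; apply: ww'.
Qed.

Lemma depends_on_nil F w w' : depends_on (fun o => o \in [::]) F -> F w = F w'.
Proof. by move=> depF; apply: depF. Qed.

Lemma chebyshev_two_point (a0 a1 b0 b1 : R) : a0 <= a1 -> b0 <= b1 ->
  (p * a1 + (1 - p) * a0) * (p * b1 + (1 - p) * b0) <= p * (a1 * b1) + (1 - p) * (a0 * b0).
Proof.
move=> a01 b01; have [p_ge0 p_le1] := andP p01; rewrite -subr_ge0.
have -> : p * (a1 * b1) + (1 - p) * (a0 * b0) - (p * a1 + (1 - p) * a0) * (p * b1 + (1 - p) * b0)
  = p * (1 - p) * ((a1 - a0) * (b1 - b0)) by ring.
by rewrite !mulr_ge0 ?subr_ge0.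
Qed.

Lemma harris_on (S : seq O) F G : increasing F -> increasing G ->
  depends_on (fun o => o \in S) F -> depends_on (fun o => o \in S) G ->
  pr F * pr G <= pr (fun w => F w && G w).
Proof.
elim: S F G => [|o S IH] F G incF incG depF depG.
  pose w0 : assignment := [ffun=> false].
  have cF w : F w = F w0 by apply: depends_on_nil depF.
  have cG w : G w = G w0 by apply: depends_on_nil depG.
  rewrite (eq_pr cF) (eq_pr cG) (@eq_pr (fun w => F w && G w) (fun=> F w0 && G w0)) => [|w].
    by rewrite !pr_cst; case: (F w0); case: (G w0); rewrite ?mul0r ?mul1r.
  by rewrite /= [F w]cF [G w]cG.
have [p_ge0 p_le1] := andP p01.
rewrite (pr_cond o F) (pr_cond o G) (pr_cond o (fun w => F w && G w)) /=.
apply: le_trans (chebyshev_two_point (le_pr_upd o incF) (le_pr_upd o incG)) _.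
by apply: lerD; apply: ler_wpM2l; rewrite ?subr_ge0 //;
  apply: IH; apply: increasing_upd || apply: depends_on_upd.
Qed.

Lemma harris F G : increasing F -> increasing G -> pr F * pr G <= pr (fun w => F w && G w).
Proof.
move=> incF incG; apply: (harris_on (S := enum O)) => // w w' ww';
  by congr (_ _); apply/ffunP => o; apply: ww'; rewrite mem_enum.
Qed.

Lemma pr_and_indep_on (S : seq O) Q F G : (forall o, o \in S -> ~ Q o) ->
  depends_on (fun o => o \in S) F -> depends_on Q G ->
  pr (fun w => F w && G w) = pr F * pr G.
Proof.
elim: S F => [|o S IH] F SQ depF depG.
  pose w0 : assignment := [ffun=> false].
  have cF w : F w = F w0 by apply: depends_on_nil depF.
  rewrite (eq_pr cF) (@eq_pr (fun w => F w && G w) (fun w => F w0 && G w)) => [|w].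
    by rewrite pr_cst; case: (F w0); rewrite /= ?mul1r ?mul0r ?pr_cst.
  by rewrite /= [F w]cF.
have G_upd x w : G (upd w o x) = G w.
  apply: depG => o' Qo'; rewrite ffunE; case: eqP => // o'o.
  by case: (SQ o' _ Qo'); rewrite o'o mem_head.
have SQ' o' : o' \in S -> ~ Q o' by move=> o'S; apply: SQ; rewrite in_cons o'S orbT.
have pr_upd x :
    pr (fun w => F (upd w o x) && G (upd w o x)) = pr (fun w => F (upd w o x)) * pr G.
  rewrite -(IH _ SQ' (depends_on_upd x depF) depG).
  by apply: eq_pr => w; rewrite /= G_upd.
by rewrite (pr_cond o F) (pr_cond o (fun w => F w && G w)) /= !pr_upd; ring.
Qed.

Lemma pr_and_indep P Q F G : (forall o, P o -> Q o -> False) ->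
  depends_on P F -> depends_on Q G -> pr (fun w => F w && G w) = pr F * pr G.
Proof.
move=> PQ depF depG.
apply: (pr_and_indep_on (S := [seq o <- enum O | `[< P o >]]) (Q := Q)) => //.
  by move=> o; rewrite mem_filter => /andP [/asboolP Po _]; apply: PQ.
by apply: sub_depends_on depF => o Po; rewrite mem_filter mem_enum andbT; apply/asboolP.
Qed.

Lemma pr_or_le F G : increasing F -> increasing G ->
  pr (fun w => F w || G w) <= prob_or (pr F) (pr G).
Proof.
move=> incF incG; rewrite pr_or /prob_or.
have -> : 1 - (1 - pr F) * (1 - pr G) = pr F + pr G - pr F * pr G by ring.
by rewrite lerD2l lerN2 harris.
Qed.

Lemma pr_or_indep P Q F G : (forall o, P o -> Q o -> False) ->
  depends_on P F -> depends_on Q G -> pr (fun w => F w || G w) = prob_or (pr F) (pr G).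
Proof. by move=> PQ depF depG; rewrite pr_or (pr_and_indep PQ depF depG) /prob_or; ring. Qed.

End ProductMeasure.

Section Game.
Implicit Types (f : seq move -> seq move -> bool) (s : strategy) (h a b : seq move).

Fixpoint bob_wins m f : bool :=
  if m is m'.+1 then
    let after x y := bob_wins m' (fun a b => f (x :: a) (y :: b)) in
    (after true true || after true false) && (after false true || after false false)
  else f [::] [::].

Lemma eq_bob_wins m f f' : (forall a b, size a = m -> size b = m -> f a b = f' a b) ->
  bob_wins m f = bob_wins m f'.
Proof.
elim: m f f' => [|m IH] f f' eq_f /=; first exact: eq_f.
have eq_after x y : bob_wins m (fun a b => f (x :: a) (y :: b)) =
                  bob_wins m (fun a b => f' (x :: a) (y :: b)).
  by apply: IH => a b sa sb; apply: eq_f; rewrite /= ?sa ?sb.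
by rewrite !eq_after.
Qed.

Lemma sub_bob_wins m f f' :
  (forall a b, f a b -> f' a b) -> bob_wins m f -> bob_wins m f'.
Proof.
elim: m f f' => [|m IH] f f' ff' /=; first exact: ff'.
have after x y := IH (fun a b => f (x :: a) (y :: b)) (fun a b => f' (x :: a) (y :: b))
  (fun a b => ff' _ _).
by case/andP => /orP [] /after-> /orP [] /after->; rewrite ?orbT.
Qed.

Lemma bob_replies_cat s h1 h a :
  bob_replies s (h1 ++ h) a = bob_replies (fun t => s (h1 ++ t)) h a.
Proof. by elim: a h => [|x a IH] h //=; rewrite !rcons_cat IH. Qed.

Lemma bob_wins_of_strategy m f s h :
  (forall a, size a = m -> f a (bob_replies s h a)) -> bob_wins m f.
Proof.
elim: m f h => [|m IH] f h win /=; first exact: win [::] erefl.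
have win_sub x : bob_wins m (fun a b => f (x :: a) (s (rcons h x) :: b)).
  apply: (IH _ (rcons (rcons h x) (s (rcons h x)))) => a sa.
  by apply: (win (x :: a)); rewrite /= sa.
move: (win_sub true) (win_sub false).
by case: (s (rcons h true)); case: (s (rcons h false)) => -> ->; rewrite ?orbT.
Qed.

Fixpoint best_reply m f h : move :=
  match m, h with
  | m'.+1, [:: x] => bob_wins m' (fun a b => f (x :: a) (true :: b))
  | m'.+1, x :: y :: h' => best_reply m' (fun a b => f (x :: a) (y :: b)) h'
  | _, _ => true
  end.

Lemma best_reply_wins m f : bob_wins m f ->
  forall a, size a = m -> f a (bob_replies (best_reply m f) [::] a).
Proof.
elim: m f => [|m IH] f win [|x a] // [sa].
have win_x : bob_wins m (fun a b => f (x :: a) (true :: b)) ||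
             bob_wins m (fun a b => f (x :: a) (false :: b)).
  by case: x; case/andP: win.
pose after y := bob_wins m (fun a b => f (x :: a) (y :: b)).
have win_y : after (after true).
  by move: win_x; rewrite -/(after true) -/(after false); case: (after true) / idP.
change (f (x :: a) (after true :: bob_replies (best_reply m.+1 f) [:: x; after true] a)).
by rewrite -[[:: x; _]]cats0 bob_replies_cat; apply: (IH _ win_y).
Qed.

End Game.

Definition tup n (s : seq move) : n.-tuple move := [tuple nth false s i | i < n].

Lemma tupE n s : size s = n -> tup n s = s :> seq move.
Proof.
move=> sz; apply: (@eq_from_nth _ false); rewrite size_tuple ?sz // => i lt_i_n.
by have /= := nth_mktuple (fun j : 'I_n => nth false s j) false (Ordinal lt_i_n).
Qed.

Lemma tupK n (t : n.-tuple move) : tup n t = t.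
Proof. exact/val_inj/tupE/size_tuple. Qed.

Lemma tup_inj n a a' : size a = n -> size a' = n -> tup n a = tup n a' -> a = a'.
Proof. by move=> sa sa' e; rewrite -(tupE sa) -(tupE sa') e. Qed.

Lemma bob_has_winning_strategyP n (O : finType)
    (out : n.-tuple move -> n.-tuple move -> O) (w : {ffun O -> bool}) :
  bob_has_winning_strategy out w <-> bob_wins n (fun a b => w (out (tup n a) (tup n b))).
Proof.
split=> [[s win] | win].
  apply: (bob_wins_of_strategy (s := s) (h := [::])) => a sa.
  by move: (win (tup n a)); rewrite /bob_moves (tupE sa).
exists (best_reply n (fun a b => w (out (tup n a) (tup n b)))) => a.
by have := best_reply_wins win (size_tuple a); rewrite tupK.
Qed.

Section Events.
Variables (R : realFieldType) (p : R) (O : finType).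
Hypothesis p01 : 0 <= p <= 1.
Implicit Types (l : seq move -> seq move -> O) (w : {ffun O -> bool}).

Definition bob_wins_event m l w := bob_wins m (fun a b => w (l a b)).

Definition subgame l x y : seq move -> seq move -> O := fun a b => l (x :: a) (y :: b).

Definition bob_answers m l x w :=
  bob_wins_event m (subgame l x true) w || bob_wins_event m (subgame l x false) w.

Definition outcomes m l (o : O) : Prop :=
  exists a b, [/\ size a = m, size b = m & o = l a b].

Definition reveals_alice m l := forall a b a' b',
  size a = m -> size b = m -> size a' = m -> size b' = m -> l a b = l a' b' -> a = a'.

Definition reveals_bob m l := forall a b a' b',
  size a = m -> size b = m -> size a' = m -> size b' = m -> l a b = l a' b' -> b = b'.

Lemma prob_bob_winsE n (out : n.-tuple move -> n.-tuple move -> O) :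
  prob_bob_wins p out = pr p (bob_wins_event n (fun a b => out (tup n a) (tup n b))).
Proof.
rewrite /prob_bob_wins big_mkcond; apply: eq_bigr => w _.
by rewrite (asbool_equiv_eqP idP (bob_has_winning_strategyP out w)) /bob_wins_event;
  case: (bob_wins _ _); rewrite ?mulr1 ?mulr0.
Qed.

Lemma increasing_bob_wins_event m l : increasing (bob_wins_event m l).
Proof. by move=> w w' ww'; apply: sub_bob_wins => a b; apply: ww'. Qed.

Lemma depends_on_outcomes m l : depends_on (outcomes m l) (bob_wins_event m l).
Proof. by move=> w w' ww'; apply: eq_bob_wins => a b sa sb; apply: ww'; exists a, b. Qed.

Lemma increasing_bob_answers m l x : increasing (bob_answers m l x).
Proof.
by move=> w w' ww' /orP [] win; apply/orP; [left | right];
  apply: increasing_bob_wins_event win.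
Qed.

Lemma depends_on_bob_answers m l x :
  depends_on (fun o => outcomes m (subgame l x true) o \/ outcomes m (subgame l x false) o)
    (bob_answers m l x).
Proof.
by move=> w w' ww'; congr orb; apply: depends_on_outcomes => o ?; apply: ww'; [left | right].
Qed.

Lemma reveals_alice_subgame m l x y : reveals_alice m.+1 l -> reveals_alice m (subgame l x y).
Proof.
move=> rev a b a' b' sa sb sa' sb' e.
by case: (rev (x :: a) (y :: b) (x :: a') (y :: b')
             (congr1 S sa) (congr1 S sb) (congr1 S sa') (congr1 S sb') e).
Qed.

Lemma reveals_bob_subgame m l x y : reveals_bob m.+1 l -> reveals_bob m (subgame l x y).
Proof.
move=> rev a b a' b' sa sb sa' sb' e.
by case: (rev (x :: a) (y :: b) (x :: a') (y :: b')
             (congr1 S sa) (congr1 S sb) (congr1 S sa') (congr1 S sb') e).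
Qed.

Lemma outcomes_subgame_alice m l x y x' y' o : reveals_alice m.+1 l ->
  outcomes m (subgame l x y) o -> outcomes m (subgame l x' y') o -> x = x'.
Proof.
move=> rev [a [b [sa sb ->]]] [a' [b' [sa' sb' e]]].
by case: (rev (x :: a) (y :: b) (x' :: a') (y' :: b')
             (congr1 S sa) (congr1 S sb) (congr1 S sa') (congr1 S sb') e).
Qed.

Lemma outcomes_subgame_bob m l x y x' y' o : reveals_bob m.+1 l ->
  outcomes m (subgame l x y) o -> outcomes m (subgame l x' y') o -> y = y'.
Proof.
move=> rev [a [b [sa sb ->]]] [a' [b' [sa' sb' e]]].
by case: (rev (x :: a) (y :: b) (x' :: a') (y' :: b')
             (congr1 S sa) (congr1 S sb) (congr1 S sa') (congr1 S sb') e).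
Qed.

Lemma reveals_alice_tup n (out : n.-tuple move -> n.-tuple move -> O) :
  (forall a b a' b', out a b = out a' b' -> a = a') ->
  reveals_alice n (fun a b => out (tup n a) (tup n b)).
Proof. by move=> out_inj a b a' b' sa sb sa' sb' /out_inj; apply: tup_inj. Qed.

Lemma reveals_bob_tup n (out : n.-tuple move -> n.-tuple move -> O) :
  (forall a b a' b', out a b = out a' b' -> b = b') ->
  reveals_bob n (fun a b => out (tup n a) (tup n b)).
Proof. by move=> out_inj a b a' b' sa sb sa' sb' /out_inj; apply: tup_inj. Qed.

Fixpoint value_AB m : R :=
  if m is m'.+1 then prob_or (value_AB m') (value_AB m') ^+ 2 else p.

Lemma value_AB_in01 m : 0 <= value_AB m <= 1.
Proof.
elim: m => [|m IH] //=; have /andP [h_ge0 h_le1] := prob_or_in01 IH IH.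
by rewrite exprn_ge0 ?exprn_ile1.
Qed.

Lemma pr_bob_wins_event0 l : pr p (bob_wins_event 0 l) = p.
Proof. exact: pr_coord. Qed.

Lemma pr_bob_wins_event_le m l : reveals_alice m l -> pr p (bob_wins_event m l) <= value_AB m.
Proof.
elim: m l => [|m IH] l rev; first by rewrite pr_bob_wins_event0.
have [g_ge0 g_le1] := andP (value_AB_in01 m).
have le_answer x : pr p (bob_answers m l x) <= prob_or (value_AB m) (value_AB m).
  apply: le_trans (pr_or_le p01 (@increasing_bob_wins_event m (subgame l x true))
    (@increasing_bob_wins_event m (subgame l x false))) _.
  by apply: ler_prob_or; rewrite ?IH ?g_le1 //; apply: reveals_alice_subgame.
rewrite /= (pr_and_indep p _ (@depends_on_bob_answers m l true)
                             (@depends_on_bob_answers m l false)).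
  by rewrite expr2; apply: ler_pM; rewrite ?pr_ge0 ?le_answer.
by move=> o [] Po [] Qo; move: (outcomes_subgame_alice rev Po Qo).
Qed.

Lemma pr_bob_wins_event_ge m l : reveals_bob m l -> value_AB m <= pr p (bob_wins_event m l).
Proof.
elim: m l => [|m IH] l rev; first by rewrite pr_bob_wins_event0.
have ge_answer x : prob_or (value_AB m) (value_AB m) <= pr p (bob_answers m l x).
  rewrite (pr_or_indep p _ (@depends_on_outcomes m (subgame l x true))
                           (@depends_on_outcomes m (subgame l x false))).
    by apply: ler_prob_or; rewrite ?IH ?pr_le1 //; apply: reveals_bob_subgame.
  by move=> o Po Qo; move: (outcomes_subgame_bob rev Po Qo).
have [h_ge0 _] := andP (prob_or_in01 (value_AB_in01 m) (value_AB_in01 m)).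
rewrite /= expr2; apply: le_trans (harris p01 (@increasing_bob_answers m l true)
                                            (@increasing_bob_answers m l false)).
by apply: ler_pM.
Qed.

End Events.

Theorem proposition1 (R : realFieldType) (p : R) (n : nat) :
  0 <= p <= 1 -> (1 <= n)%N ->
  P_Ab p n <= P_AB p n /\ P_AB p n <= P_aB p n.
Proof.
move=> p01 _.
rewrite /P_Ab /P_AB /P_aB !prob_bob_winsE.
split; apply: le_trans (pr_bob_wins_event_le p01 _) (pr_bob_wins_event_ge p01 _);
  by [apply: reveals_alice_tup => a b a' b' [-> _] | apply: reveals_bob_tup => a b a' b' [_ ->]].
Qed.
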